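(* Let $X$ be a vector lattice equipped with a lattice norm and let $\widehat X$ be its norm completion (a Banach lattice). The following are equivalent: (1) for every Banach lattice $Y$, every bounded linear injective lattice homomorphism $T:X\to Y$ extends to a bounded linear injective operator $\widehat T:\widehat X\to Y$; (2) for every $x\in\widehat X$ with $x>0$, one has $I_x\cap X\neq\{0\}$, where $I_x$ is the closed ideal of $\widehat X$ generated by $x$. *)

From HB Require Import structures.
From mathcomp Require Import all_boot all_order all_algebra.
From mathcomp Require Import all_classical all_reals all_analysis.
Set Implicit Arguments. Unset Strict Implicit. Unset Printing Implicit Defensive.
Import Order.TTheory GRing.Theory Num.Theory.
Import numFieldNormedType.Exports.
Local Open Scope classical_set_scope.
Local Open Scope ring_scope.

Record vlattice (R : realType) := VLattice {
  vl_car :> normedModType R;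
  vl_le : vl_car -> vl_car -> Prop;
  vl_join : vl_car -> vl_car -> vl_car;
  vl_le_refl : forall x, vl_le x x;
  vl_le_anti : forall x y, vl_le x y -> vl_le y x -> x = y;
  vl_le_trans : forall x y z, vl_le x y -> vl_le y z -> vl_le x z;
  vl_le_add : forall x y z, vl_le x y -> vl_le (x + z) (y + z);
  vl_le_scale : forall (a : R) x y, 0 <= a -> vl_le x y -> vl_le (a *: x) (a *: y);
  vl_join_ubl : forall x y, vl_le x (vl_join x y);
  vl_join_ubr : forall x y, vl_le y (vl_join x y);
  vl_join_least : forall x y z, vl_le x z -> vl_le y z -> vl_le (vl_join x y) z;
  vl_lattice_norm : forall x y,
    vl_le (vl_join x (- x)) (vl_join y (- y)) -> `|x| <= `|y|
}.

Arguments vl_le {R} v _ _.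
Arguments vl_join {R} v _ _.

Definition vl_abs (R : realType) (X : vlattice R) (x : X) : X := vl_join X x (- x).

Definition is_banach (R : realType) (X : vlattice R) : Prop :=
  forall u : nat -> X,
    (forall e : R, 0 < e -> exists N : nat, forall m n : nat,
        (N <= m)%N -> (N <= n)%N -> `|u m - u n| < e) ->
    exists l : X, forall e : R, 0 < e -> exists N : nat, forall n : nat,
        (N <= n)%N -> `|u n - l| < e.

Definition is_lin (R : realType) (X Y : vlattice R) (T : X -> Y) : Prop :=
  forall (a : R) (x y : X), T (a *: x + y) = a *: T x + T y.

Definition is_bounded (R : realType) (X Y : vlattice R) (T : X -> Y) : Prop :=
  exists C : R, forall x : X, `|T x| <= C * `|x|.

Definition is_lattice_hom (R : realType) (X Y : vlattice R) (T : X -> Y) : Prop :=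
  forall x y : X, T (vl_join X x y) = vl_join Y (T x) (T y).

Definition is_completion (R : realType) (X Xh : vlattice R) (j : X -> Xh) : Prop :=
  [/\ is_banach Xh, is_lin j, is_lattice_hom j,
      (forall x : X, `|j x| = `|x|) &
      (forall (y : Xh) (e : R), 0 < e -> exists x : X, `|y - j x| < e)].

Definition is_ideal (R : realType) (X : vlattice R) (I : set X) : Prop :=
  [/\ I 0,
      (forall (a : R) (x y : X), I x -> I y -> I (a *: x + y)) &
      (forall x y : X, I y -> vl_le X (vl_abs x) (vl_abs y) -> I x)].

Definition is_closed_ideal (R : realType) (X : vlattice R) (I : set X) : Prop :=
  is_ideal I /\ closed I.

Definition gen_closed_ideal (R : realType) (X : vlattice R) (x : X) : set X :=
  [set y | forall J : set X, is_closed_ideal J -> J x -> J y].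

(* (1) -> (2): if the closed ideal [G] generated by [x > 0] misses [j X], then
   [X -> Xh -> Xh/G] is an injective bounded lattice homomorphism into a Banach lattice.
   Its injective extension agrees with the quotient map on the dense set [j X], hence
   everywhere, and therefore kills [x].
   (2) -> (1): a bounded [T] extends by uniform continuity to [Th : Xh -> Y], which is
   again a lattice homomorphism, so its kernel is a closed ideal. A nonzero [y] in the
   kernel would put [|y|], hence some [j z] with [z <> 0], in it, contradicting the
   injectivity of [T].
   The quotient of a Banach lattice by a closed ideal is a Banach lattice; that the
   quotient norm is a lattice norm rests on the Riesz decomposition property. *)

From HB Require Import structures.
From mathcomp Require Import all_boot all_order all_algebra.
From mathcomp Require Import all_classical all_reals all_analysis.
From mathcomp Require Import lra.
Import Order.TTheory GRing.Theory Num.Theory.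
Import numFieldNormedType.Exports.
Local Open Scope classical_set_scope.
Local Open Scope ring_scope.

Set Implicit Arguments. Unset Strict Implicit. Unset Printing Implicit Defensive.

Section VectorLattice.
Variables (R : realType) (V : vlattice R).
Local Notation le := (vl_le V).
Local Notation join := (vl_join V).
Local Notation abs := (@vl_abs R V).

Lemma vl_le_addl (x y z : V) : le x y -> le (z + x) (z + y).
Proof. by move=> h; rewrite ![z + _]addrC; apply: vl_le_add. Qed.

Lemma vl_le_add2r (x y z : V) : le (x + z) (y + z) -> le x y.
Proof. by move=> /(vl_le_add (- z)); rewrite !addrK. Qed.

Lemma vl_leD (x y z w : V) : le x y -> le z w -> le (x + z) (y + w).
Proof. by move=> h1 h2; apply: vl_le_trans (vl_le_add z h1) (vl_le_addl y h2). Qed.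

Lemma vl_addr_ge0 (x y : V) : le 0 x -> le 0 y -> le 0 (x + y).
Proof. by move=> hx hy; have := vl_leD hx hy; rewrite addr0. Qed.

Lemma vl_le_addr_ge0 (x y : V) : le 0 y -> le x (x + y).
Proof. by move=> /(vl_le_addl x); rewrite addr0. Qed.

Lemma vl_le_addl_ge0 (x y : V) : le 0 y -> le x (y + x).
Proof. by rewrite addrC; apply: vl_le_addr_ge0. Qed.

Lemma vl_subr_ge0 (x y : V) : le 0 (y - x) <-> le x y.
Proof.
split; first by move=> /(vl_le_add x); rewrite add0r subrK.
by move=> /(vl_le_add (- x)); rewrite subrr.
Qed.

Lemma vl_leN2 (x y : V) : le (- x) (- y) <-> le y x.
Proof.
suff leN (a b : V) : le a b -> le (- b) (- a) by split=> /leN; rewrite ?opprK.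
by move=> /(vl_le_add (- a - b)); rewrite addrA subrr add0r addrCA subrr addr0.
Qed.

Lemma vl_joinC (x y : V) : join x y = join y x.
Proof.
by apply: vl_le_anti; apply: vl_join_least;
  [exact: vl_join_ubr|exact: vl_join_ubl|exact: vl_join_ubr|exact: vl_join_ubl].
Qed.

Lemma vl_join_r (x y : V) : le x y -> join x y = y.
Proof.
move=> h; apply: vl_le_anti; last exact: vl_join_ubr.
by apply: vl_join_least => //; apply: vl_le_refl.
Qed.

Lemma vl_joinxx (x : V) : join x x = x.
Proof. exact/vl_join_r/vl_le_refl. Qed.

Lemma vl_le_abs (x : V) : le x (abs x). Proof. exact: vl_join_ubl. Qed.

Lemma vl_leN_abs (x : V) : le (- x) (abs x). Proof. exact: vl_join_ubr. Qed.

Lemma vl_abs_ge0 (x : V) : le 0 (abs x).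
Proof.
have h2 : (0 : R) <= 2^-1 by rewrite invr_ge0 ler0n.
have := vl_le_scale h2 (vl_leD (vl_le_abs x) (vl_leN_abs x)).
have -> : abs x + abs x = 2 *: abs x by rewrite scaler_nat mulr2n.
by rewrite subrr scaler0 scalerA mulVf ?pnatr_eq0 ?scale1r.
Qed.

Lemma vl_abs_le (w c : V) : le w c -> le (- c) w -> le (abs w) c.
Proof. by move=> h1 h2; apply: vl_join_least => //; apply/vl_leN2; rewrite opprK. Qed.

Lemma vl_abs_ge0_id (x : V) : le 0 x -> abs x = x.
Proof.
move=> h; rewrite /vl_abs vl_joinC; apply: vl_join_r.
have hN : le (- x) (- 0) by apply/vl_leN2.
by rewrite oppr0 in hN; apply: vl_le_trans hN h.
Qed.

Lemma vl_abs_abs (x : V) : abs (abs x) = abs x.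
Proof. exact/vl_abs_ge0_id/vl_abs_ge0. Qed.

Lemma vl_absN (x : V) : abs (- x) = abs x.
Proof. by rewrite /vl_abs opprK vl_joinC. Qed.

Lemma vl_abs0 : abs 0 = 0.
Proof. by rewrite /vl_abs oppr0 vl_joinxx. Qed.

Lemma vl_absD (x y : V) : le (abs (x + y)) (abs x + abs y).
Proof.
apply: vl_abs_le; first exact: vl_leD (vl_le_abs _) (vl_le_abs _).
by apply/vl_leN2; rewrite opprK opprD; apply: vl_leD; apply: vl_leN_abs.
Qed.

Lemma vl_norm_le (x y : V) : le (abs x) (abs y) -> `|x| <= `|y|.
Proof. exact: vl_lattice_norm. Qed.

Lemma vl_norm_abs (x : V) : `|abs x| = `|x|.
Proof. by apply/eqP; rewrite eq_le !vl_norm_le // vl_abs_abs; apply: vl_le_refl. Qed.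

Lemma vl_norm_le_ge0 (x w : V) : le (abs x) w -> `|x| <= `|w|.
Proof. by move=> h; apply/vl_norm_le/(vl_le_trans h)/vl_le_abs. Qed.

Lemma vl_abs_eq0 (x : V) : abs x = 0 -> x = 0.
Proof. by move=> h; apply/normr0_eq0; rewrite -vl_norm_abs h normr0. Qed.

Lemma vl_le_add_abs (a a' : V) : le a (a' + abs (a - a')).
Proof. by have := vl_le_addl a' (vl_le_abs (a - a')); rewrite addrC subrK. Qed.

Lemma vl_join_sub_le (a b a' b' : V) :
  le (join a b - join a' b') (abs (a - a') + abs (b - b')).
Proof.
apply/vl_subr_ge0; rewrite opprB addrA; apply/vl_subr_ge0; rewrite addrC.
apply: vl_join_least.
- apply: vl_le_trans (vl_le_add_abs a a') _; apply: vl_leD; first exact: vl_join_ubl.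
  exact/vl_le_addr_ge0/vl_abs_ge0.
- apply: vl_le_trans (vl_le_add_abs b b') _; apply: vl_leD; first exact: vl_join_ubr.
  exact/vl_le_addl_ge0/vl_abs_ge0.
Qed.

Lemma vl_abs_join_sub (a b a' b' : V) :
  le (abs (join a b - join a' b')) (abs (a - a') + abs (b - b')).
Proof.
apply: vl_abs_le; first exact: vl_join_sub_le.
apply/vl_leN2; rewrite opprK opprB -(vl_absN (a - a')) -(vl_absN (b - b')) !opprB.
exact: vl_join_sub_le.
Qed.

Lemma vl_norm_join_sub (a b a' b' : V) :
  `|join a b - join a' b'| <= `|a - a'| + `|b - b'|.
Proof.
apply: le_trans (vl_norm_le_ge0 (vl_abs_join_sub a b a' b')) _.
by rewrite -(vl_norm_abs (a - a')) -(vl_norm_abs (b - b')) ler_normD.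
Qed.

Lemma vl_sub_truncations_le (y w : V) : le 0 w ->
  le (y - join (y - w) 0 + join (- y - w) 0) w.
Proof.
move=> hw; set u := join (y - w) 0; set v := join (- y - w) 0.
have hu : le 0 u by exact: vl_join_ubr.
have hww : le (- w) w.
  by apply: (vl_le_trans _ hw); have /vl_leN2 := hw; rewrite oppr0.
have hv : le v (w - y + u).
  apply: vl_join_least.
    apply: vl_le_trans (vl_le_addl (- y) hww) _; rewrite addrC.
    by have := vl_le_addl (w - y) hu; rewrite addr0.
  by have /vl_subr_ge0 := vl_join_ubl (y - w) 0; rewrite opprB addrC.
apply: vl_le_trans (vl_le_addl (y - u) hv) _.
by rewrite addrC -addrA (addrC u) subrK subrK; apply: vl_le_refl.
Qed.

End VectorLattice.

Section Ideal.
Variables (R : realType) (V : vlattice R) (I : set V).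
Hypothesis hI : is_ideal I.
Local Notation le := (vl_le V).
Local Notation join := (vl_join V).
Local Notation abs := (@vl_abs R V).

Lemma ideal0 : I 0. Proof. by case: hI. Qed.

Lemma idealZD a x y : I x -> I y -> I (a *: x + y).
Proof. by case: hI => _ h _; apply: h. Qed.

Lemma ideal_solid x y : I y -> le (abs x) (abs y) -> I x.
Proof. by case: hI => _ _ h; apply: h. Qed.

Lemma idealD x y : I x -> I y -> I (x + y).
Proof. by move=> hx hy; have := idealZD 1 hx hy; rewrite scale1r. Qed.

Lemma idealZ a x : I x -> I (a *: x).
Proof. by move=> hx; have := idealZD a hx ideal0; rewrite addr0. Qed.

Lemma idealN x : I x -> I (- x).
Proof. by move=> /(idealZ (-1)); rewrite scaleN1r. Qed.

Lemma idealB x y : I x -> I y -> I (x - y).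
Proof. by move=> hx /idealN; apply: idealD. Qed.

Lemma ideal_abs x : I x -> I (abs x).
Proof. by move=> hx; apply: ideal_solid hx _; rewrite vl_abs_abs; apply: vl_le_refl. Qed.

Lemma ideal_le_abs x y : I y -> le 0 x -> le x (abs y) -> I x.
Proof. by move=> hy hx h; apply: ideal_solid hy _; rewrite vl_abs_ge0_id. Qed.

Lemma ideal_abs_add x y : I x -> I y -> I (abs x + abs y).
Proof. by move=> hx hy; apply: idealD; apply: ideal_abs. Qed.

(* Riesz decomposition; the witness is [(x - w)^+ - (- x - w)^+], whose two parts lie below [p]. *)
Lemma ideal_riesz x w p : le 0 w -> I p -> le 0 p -> le (abs x) (w + p) ->
  exists2 k, I k & le (abs (x - k)) w.
Proof.
move=> hw hp hp0 h.
have trunc_in (s : V) : le s (abs x) -> I (join (s - w) 0).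
  move=> hs; apply: (ideal_le_abs hp); first exact: vl_join_ubr.
  rewrite (vl_abs_ge0_id hp0); apply: vl_join_least => //.
  apply: (@vl_le_add2r _ _ _ _ w); rewrite subrK addrC.
  exact: vl_le_trans hs h.
exists (join (x - w) 0 - join (- x - w) 0).
  by apply: idealB; apply: trunc_in; [apply: vl_le_abs | apply: vl_leN_abs].
apply: vl_abs_le.
  by rewrite opprB addrA addrAC; apply: vl_sub_truncations_le.
apply/vl_leN2; rewrite opprK.
rewrite opprB addrC addrA addrAC.
by have := vl_sub_truncations_le (- x) hw; rewrite opprK.
Qed.

End Ideal.

Lemma gen_closed_ideal_closed_ideal (R : realType) (V : vlattice R) (x : V) :
  is_closed_ideal (gen_closed_ideal x).
Proof.
split; first split.
- by move=> J [[]].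
- move=> a y y' hy hy' J hJ hx; have hJi : is_ideal J := proj1 hJ.
  exact: (idealZD hJi a (hy J hJ hx) (hy' J hJ hx)).
- move=> y y' hy' hle J hJ hx; have hJi : is_ideal J := proj1 hJ.
  exact: (ideal_solid hJi (hy' J hJ hx) hle).
- move=> y hy J hJ hx; apply: (proj2 hJ).
  by apply: closureS hy => w hw; apply: hw.
Qed.

Section Quotient.
Variables (R : realType) (V : vlattice R) (I : set V).
Hypothesis hI : is_closed_ideal I.
Local Notation le := (vl_le V).
Local Notation join := (vl_join V).
Local Notation abs := (@vl_abs R V).
Let hId : is_ideal I := proj1 hI.

Definition eqmod (x y : V) := I (x - y).

Lemma eqmod_refl x : eqmod x x.
Proof. by rewrite /eqmod subrr; apply: ideal0. Qed.

Lemma eqmod_sym x y : eqmod x y -> eqmod y x.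
Proof. by rewrite /eqmod => /(idealN hId); rewrite opprB. Qed.

Lemma eqmod_trans x y z : eqmod x y -> eqmod y z -> eqmod x z.
Proof. by rewrite /eqmod => h1 h2; have := idealD hId h1 h2; rewrite addrA subrK. Qed.

Lemma eqmodD x y x' y' : eqmod x x' -> eqmod y y' -> eqmod (x + y) (x' + y').
Proof. by rewrite /eqmod opprD addrACA; apply: idealD. Qed.

Lemma eqmodN x x' : eqmod x x' -> eqmod (- x) (- x').
Proof. by rewrite /eqmod -opprD; apply: idealN. Qed.

Lemma eqmodZ a x x' : eqmod x x' -> eqmod (a *: x) (a *: x').
Proof. by rewrite /eqmod -scalerBr; apply: idealZ. Qed.

Lemma eqmod_join x y x' y' : eqmod x x' -> eqmod y y' -> eqmod (join x y) (join x' y').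
Proof.
move=> h1 h2; apply: (ideal_solid hId (ideal_abs_add hId h1 h2)).
rewrite (vl_abs_ge0_id (vl_addr_ge0 (vl_abs_ge0 _) (vl_abs_ge0 _))).
exact: vl_abs_join_sub.
Qed.

Lemma exists_eqmod y : exists z, `[< eqmod z y >].
Proof. by exists y; apply/asboolP/eqmod_refl. Qed.

(* Each class is represented by a chosen element, so that the quotient is a subtype of [V]. *)
Definition repr_mod (y : V) : V := xchoose (exists_eqmod y).

Lemma repr_modP y : eqmod (repr_mod y) y.
Proof. exact/asboolP/(xchooseP (exists_eqmod y)). Qed.

Lemma repr_mod_eq y y' : eqmod y y' -> repr_mod y = repr_mod y'.
Proof.
move=> h; apply: eq_xchoose => z; apply/asboolP/asboolP => h'.
  exact: eqmod_trans h' h.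
exact: eqmod_trans h' (eqmod_sym h).
Qed.

Lemma repr_modK y : repr_mod (repr_mod y) = repr_mod y.
Proof. exact/repr_mod_eq/repr_modP. Qed.

Definition quot := {y : V | repr_mod y == y}.

HB.instance Definition _ := [Choice of quot by <:].

Definition qproj (y : V) : quot := exist _ (repr_mod y) (introT eqP (repr_modK y)).

Lemma qproj_eq y y' : eqmod y y' -> qproj y = qproj y'.
Proof. by move=> h; apply: val_inj; apply: repr_mod_eq. Qed.

Lemma qprojK (a : quot) : qproj (val a) = a.
Proof. by apply: val_inj; case: a => y /= /eqP. Qed.

Lemma val_qproj y : eqmod (val (qproj y)) y. Proof. exact: repr_modP. Qed.

Lemma qproj_eqmod y y' : qproj y = qproj y' -> eqmod y y'.
Proof.
move=> h; apply: eqmod_trans (eqmod_sym (val_qproj y)) _.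
by rewrite h; apply: val_qproj.
Qed.

Definition qadd (a b : quot) : quot := qproj (val a + val b).
Definition qopp (a : quot) : quot := qproj (- val a).
Definition qscale (c : R) (a : quot) : quot := qproj (c *: val a).

Lemma qaddA : associative qadd.
Proof.
move=> a b c; apply: qproj_eq.
apply: eqmod_trans (eqmodD (eqmod_refl _) (val_qproj _)) _.
apply: eqmod_trans _ (eqmodD (eqmod_sym (val_qproj _)) (eqmod_refl _)).
by rewrite addrA; apply: eqmod_refl.
Qed.

Lemma qaddC : commutative qadd.
Proof. by move=> a b; rewrite /qadd addrC. Qed.

Lemma qadd0 : left_id (qproj 0) qadd.
Proof.
move=> a; rewrite -[RHS]qprojK; apply: qproj_eq.
by rewrite -[X in eqmod _ X]add0r; apply: eqmodD (val_qproj _) (eqmod_refl _).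
Qed.

Lemma qaddN : left_inverse (qproj 0) qopp qadd.
Proof.
move=> a; apply: qproj_eq.
by rewrite -(addNr (val a)); apply: eqmodD (val_qproj _) (eqmod_refl _).
Qed.

HB.instance Definition _ := GRing.isZmodule.Build quot qaddA qaddC qadd0 qaddN.

Lemma qscaleA a b (v : quot) : qscale a (qscale b v) = qscale (a * b) v.
Proof.
apply: qproj_eq; rewrite -scalerA.
exact: eqmodZ (val_qproj _).
Qed.

Lemma qscale1 : left_id 1 qscale.
Proof. by move=> v; rewrite /qscale scale1r qprojK. Qed.

Lemma qscaleDr : right_distributive qscale +%R.
Proof.
move=> c u v; apply: qproj_eq.
apply: eqmod_trans (eqmodZ _ (val_qproj _)) _.
rewrite scalerDr; apply: eqmod_sym.
exact: eqmodD (val_qproj _) (val_qproj _).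
Qed.

Lemma qscaleDl (v : quot) : {morph qscale^~ v : a b / a + b}.
Proof.
move=> a b; apply: qproj_eq; rewrite scalerDl; apply: eqmod_sym.
exact: eqmodD (val_qproj _) (val_qproj _).
Qed.

HB.instance Definition _ :=
  GRing.Zmodule_isLmodule.Build R quot qscaleA qscale1 qscaleDr qscaleDl.

Lemma qprojD y y' : qproj (y + y') = qproj y + qproj y'.
Proof. by apply: qproj_eq; apply: eqmod_sym; apply: eqmodD; apply: val_qproj. Qed.

Lemma qprojZ a y : qproj (a *: y) = a *: qproj y.
Proof. by apply: qproj_eq; apply: eqmod_sym; apply: eqmodZ; apply: val_qproj. Qed.

Definition dist_mod (y : V) : R := inf [set `|y - k| | k in I].

Lemma dist_mod_le y k : I k -> dist_mod y <= `|y - k|.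
Proof. by move=> hk; apply: ge_inf; [exists 0 => _ [? _ <-] | exists k]. Qed.

Lemma dist_mod_glb y c : (forall k, I k -> c <= `|y - k|) -> c <= dist_mod y.
Proof.
move=> h; apply: lb_le_inf; first by exists `|y - 0|, 0; [apply: ideal0|].
by move=> _ [k hk <-]; apply: h.
Qed.

Lemma dist_mod_ge0 y : 0 <= dist_mod y.
Proof. exact: dist_mod_glb. Qed.

Lemma dist_mod_approx y e : 0 < e -> exists2 k, I k & `|y - k| < dist_mod y + e.
Proof.
move=> e0; have [|_ [k hk <-] h] := @inf_adherent _ [set `|y - k| | k in I] _ e0.
  by split; [exists `|y - 0|, 0; [apply: ideal0|] | exists 0 => _ [? _ <-]].
by exists k.
Qed.

Lemma dist_mod_le_norm y : dist_mod y <= `|y|.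
Proof. by have := dist_mod_le y (ideal0 hId); rewrite subr0. Qed.

Lemma dist_modD x y : dist_mod (x + y) <= dist_mod x + dist_mod y.
Proof.
apply/ler_addgt0Pr => e e0.
have e20 : 0 < e / 2 by rewrite divr_gt0.
have [k1 h1 h1'] := dist_mod_approx x e20.
have [k2 h2 h2'] := dist_mod_approx y e20.
apply: le_trans (dist_mod_le _ (idealD hId h1 h2)) _.
rewrite opprD addrACA; apply: le_trans (ler_normD _ _) _.
by apply: le_trans (ltW (ltrD h1' h2')) _; rewrite addrACA -splitr.
Qed.

Lemma dist_mod_eqmod y y' : eqmod y y' -> dist_mod y = dist_mod y'.
Proof.
suff le_dist z z' : eqmod z z' -> dist_mod z <= dist_mod z'.
  by move=> h; apply/eqP; rewrite eq_le !le_dist //; apply: eqmod_sym.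
move=> h; have := dist_mod_le (z - z') h; rewrite subrr normr0.
by have := dist_modD (z - z') z'; rewrite subrK; lra.
Qed.

Lemma dist_modZ c y : dist_mod (c *: y) = `|c| * dist_mod y.
Proof.
have [->|c0] := eqVneq c 0.
  rewrite scale0r normr0 mul0r; apply/eqP; rewrite eq_le dist_mod_ge0 andbT.
  by have := dist_mod_le_norm 0; rewrite normr0.
have nc0 : 0 < `|c| by rewrite normr_gt0.
apply/eqP; rewrite eq_le; apply/andP; split.
  rewrite mulrC -ler_pdivrMr //; apply: dist_mod_glb => k hk.
  rewrite ler_pdivrMr // mulrC -normrZ scalerBr.
  exact/dist_mod_le/(idealZ hId).
apply: dist_mod_glb => k hk.
have -> : c *: y - k = c *: (y - c^-1 *: k) by rewrite scalerBr scalerA mulfV ?scale1r.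
by rewrite normrZ ler_wpM2l // dist_mod_le //; apply: idealZ.
Qed.

(* The only place where closedness of [I] is used. *)
Lemma dist_mod_eq0 y : dist_mod y = 0 -> I y.
Proof.
move=> h; apply: (proj2 hI) => B /nbhs_ballP [e e0 hB].
have [k hk hyk] := dist_mod_approx y e0.
exists k; split => //; apply: hB.
by rewrite -ball_normE /ball_ /=; rewrite h add0r in hyk.
Qed.

Definition qnorm (a : quot) : R := dist_mod (val a).

Lemma qnorm_qproj y : qnorm (qproj y) = dist_mod y.
Proof. exact/dist_mod_eqmod/val_qproj. Qed.

Lemma qnormD (a b : quot) : qnorm (a + b) <= qnorm a + qnorm b.
Proof.
by change (qnorm (qproj (val a + val b)) <= qnorm a + qnorm b); rewrite qnorm_qproj dist_modD.
Qed.

Lemma qnormZ c (a : quot) : qnorm (c *: a) = `|c| * qnorm a.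
Proof. by change (qnorm (qproj (c *: val a)) = `|c| * qnorm a); rewrite qnorm_qproj dist_modZ. Qed.

Lemma qnorm_eq0 (a : quot) : qnorm a = 0 -> a = 0.
Proof.
move=> /dist_mod_eq0 h; rewrite -[a]qprojK; apply: qproj_eq.
by rewrite /eqmod subr0.
Qed.

HB.instance Definition _ := Lmodule_isNormed.Build R quot qnormD qnormZ qnorm_eq0.

Lemma quot_normB (a b : quot) : `|a - b| = dist_mod (val a - val b).
Proof.
change (qnorm (qproj (val a + val (qproj (- val b)))) = dist_mod (val a - val b)).
by rewrite qnorm_qproj; apply/dist_mod_eqmod/eqmodD; [apply: eqmod_refl | apply: val_qproj].
Qed.

Definition le_mod (x y : V) := exists2 i, I i & le x (y + i).

Lemma le_mod_refl x : le_mod x x.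
Proof. by exists 0; [apply: ideal0 | rewrite addr0; apply: vl_le_refl]. Qed.

Lemma le_mod_trans x y z : le_mod x y -> le_mod y z -> le_mod x z.
Proof.
move=> [i hi h1] [i' hi' h2]; exists (i' + i); first exact: idealD.
by apply: vl_le_trans h1 _; rewrite addrA; apply: vl_le_add.
Qed.

Lemma le_mod_le x y : le x y -> le_mod x y.
Proof. by move=> h; exists 0; [apply: ideal0 | rewrite addr0]. Qed.

Lemma eqmod_le_mod x y : eqmod x y -> le_mod x y.
Proof. by move=> h; exists (x - y) => //; rewrite addrC subrK; apply: vl_le_refl. Qed.

Lemma le_mod_congr x y x' y' : eqmod x' x -> eqmod y y' -> le_mod x y -> le_mod x' y'.
Proof.
move=> h1 h2 h; apply: le_mod_trans (eqmod_le_mod h1) _.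
exact: le_mod_trans h (eqmod_le_mod h2).
Qed.

Lemma le_modD x y z : le_mod x y -> le_mod (x + z) (y + z).
Proof. by move=> [i hi h]; exists i => //; rewrite addrAC; apply: vl_le_add. Qed.

Lemma le_modZ c x y : 0 <= c -> le_mod x y -> le_mod (c *: x) (c *: y).
Proof.
move=> c0 [i hi h]; exists (c *: i); first exact: idealZ.
by rewrite -scalerDr; apply: vl_le_scale.
Qed.

Lemma le_mod_join x y z : le_mod x z -> le_mod y z -> le_mod (join x y) z.
Proof.
move=> [i hi h1] [i' hi' h2]; exists (abs i + abs i'); first exact: ideal_abs_add.
apply: vl_join_least.
  apply: vl_le_trans h1 (vl_le_addl _ (vl_le_trans (vl_le_abs i) _)).
  exact/vl_le_addr_ge0/vl_abs_ge0.
apply: vl_le_trans h2 (vl_le_addl _ (vl_le_trans (vl_le_abs i') _)).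
exact/vl_le_addl_ge0/vl_abs_ge0.
Qed.

Lemma le_mod_anti x y : le_mod x y -> le_mod y x -> eqmod x y.
Proof.
move=> [i hi h1] [i' hi' h2].
have sub_le a b k : le a (b + k) -> le (a - b) (abs k).
  move=> /(vl_le_add (- b)); rewrite addrAC subrr add0r => h.
  exact: vl_le_trans h (vl_le_abs k).
have hs := vl_addr_ge0 (vl_abs_ge0 i) (vl_abs_ge0 i').
apply: (ideal_solid hId (ideal_abs_add hId hi hi')); rewrite (vl_abs_ge0_id hs).
apply: vl_abs_le.
  exact/(vl_le_trans (sub_le _ _ _ h1))/vl_le_addr_ge0/vl_abs_ge0.
apply/vl_leN2; rewrite !opprK opprB.
exact/(vl_le_trans (sub_le _ _ _ h2))/vl_le_addl_ge0/vl_abs_ge0.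
Qed.

Lemma dist_mod_lattice_norm x y : le_mod (abs x) (abs y) -> dist_mod x <= dist_mod y.
Proof.
case=> i hi hxy; apply: dist_mod_glb => k hk.
have hp0 := vl_addr_ge0 (vl_abs_ge0 k) (vl_abs_ge0 i).
have hle : le (abs x) (abs (y - k) + (abs k + abs i)).
  apply: vl_le_trans hxy _; rewrite addrA; apply: vl_leD; last exact: vl_le_abs.
  by have := vl_absD (y - k) k; rewrite subrK.
have [k' hk' hxk'] := ideal_riesz hId (vl_abs_ge0 _) (ideal_abs_add hId hk hi) hp0 hle.
apply: le_trans (dist_mod_le _ hk') _.
by rewrite -(vl_norm_abs (y - k)); apply: vl_norm_le_ge0.
Qed.

Definition le_quot (a b : quot) := le_mod (val a) (val b).
Definition join_quot (a b : quot) : quot := qproj (join (val a) (val b)).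

Lemma le_quot_refl a : le_quot a a. Proof. exact: le_mod_refl. Qed.

Lemma le_quot_anti a b : le_quot a b -> le_quot b a -> a = b.
Proof.
by move=> h1 h2; rewrite -[a]qprojK -[b]qprojK; apply/qproj_eq/le_mod_anti.
Qed.

Lemma le_quot_trans a b c : le_quot a b -> le_quot b c -> le_quot a c.
Proof. exact: le_mod_trans. Qed.

Lemma le_quot_add a b c : le_quot a b -> le_quot (a + c) (b + c).
Proof. by move=> h; apply: le_mod_congr (val_qproj _) (eqmod_sym (val_qproj _)) (le_modD _ h). Qed.

Lemma le_quot_scale c a b : 0 <= c -> le_quot a b -> le_quot (c *: a) (c *: b).
Proof.
move=> c0 h.
exact: le_mod_congr (val_qproj _) (eqmod_sym (val_qproj _)) (le_modZ c0 h).
Qed.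

Lemma join_quot_ubl a b : le_quot a (join_quot a b).
Proof. exact: le_mod_congr (eqmod_refl _) (eqmod_sym (val_qproj _)) (le_mod_le (vl_join_ubl _ _)). Qed.

Lemma join_quot_ubr a b : le_quot b (join_quot a b).
Proof. exact: le_mod_congr (eqmod_refl _) (eqmod_sym (val_qproj _)) (le_mod_le (vl_join_ubr _ _)). Qed.

Lemma join_quot_least a b c : le_quot a c -> le_quot b c -> le_quot (join_quot a b) c.
Proof. by move=> h1 h2; apply: le_mod_congr (val_qproj _) (eqmod_refl _) (le_mod_join h1 h2). Qed.

Lemma val_abs_quot (a : quot) : eqmod (val (join_quot a (- a))) (abs (val a)).
Proof. exact: eqmod_trans (val_qproj _) (eqmod_join (eqmod_refl _) (val_qproj _)). Qed.

Lemma quot_lattice_norm (a b : quot) :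
  le_quot (join_quot a (- a)) (join_quot b (- b)) -> `|a| <= `|b|.
Proof.
move=> h; apply: dist_mod_lattice_norm.
exact: le_mod_congr (eqmod_sym (val_abs_quot a)) (val_abs_quot b) h.
Qed.

Definition quotient_vlattice : vlattice R :=
  VLattice le_quot_refl le_quot_anti le_quot_trans le_quot_add le_quot_scale
    join_quot_ubl join_quot_ubr join_quot_least quot_lattice_norm.

End Quotient.

Section Sequences.
Variable R : realType.

Definition halfpow (k : nat) : R := (2 ^+ k)^-1.

Lemma halfpow_gt0 k : 0 < halfpow k.
Proof. by rewrite /halfpow invr_gt0 exprn_gt0. Qed.

Lemma halfpowS k : halfpow k.+1 = halfpow k / 2.
Proof. by rewrite /halfpow exprS invfM mulrC. Qed.

Lemma halfpow_le i j : (i <= j)%N -> halfpow j <= halfpow i.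
Proof.
move=> hij; rewrite /halfpow lef_pV2 ?posrE ?exprn_gt0 //.
by rewrite (ler_eXn2l (ltr1n _ 2)).
Qed.

Lemma halfpow_lt (e : R) : 0 < e -> exists n, halfpow n < e.
Proof.
move=> e0; exists (Num.Def.archi_bound e^-1).
rewrite /halfpow -[X in _ < X]invrK ltf_pV2 ?posrE ?invr_gt0 ?exprn_gt0 //.
exact: upper_nthrootP.
Qed.

Definition cauchy_seq (V : normedModType R) (u : nat -> V) :=
  forall e : R, 0 < e -> exists N : nat, forall m n : nat,
    (N <= m)%N -> (N <= n)%N -> `|u m - u n| < e.

Definition tends_to (V : normedModType R) (u : nat -> V) (l : V) :=
  forall e : R, 0 < e -> exists N : nat, forall n : nat, (N <= n)%N -> `|u n - l| < e.

Lemma cauchy_fast_subseq (V : normedModType R) (u : nat -> V) : cauchy_seq u ->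
  exists M : nat -> nat, (forall k, (M k <= M k.+1)%N) /\
    (forall k n, (M k <= n)%N -> `|u n - u (M k)| < halfpow k).
Proof.
move=> hu; have /choice[N hN] : forall k, exists N : nat, forall m n,
    (N <= m)%N -> (N <= n)%N -> `|u m - u n| < halfpow k.
  by move=> k; apply: hu; apply: halfpow_gt0.
pose M := fix M k := if k is k'.+1 then maxn (M k') (N k) else N 0.
have hNM k : (N k <= M k)%N by case: k => [|k] //=; rewrite leq_maxr.
exists M; split=> [k | k n hn]; first by rewrite /= leq_maxl.
by apply: hN; [apply: leq_trans hn | ].
Qed.

Lemma fast_cauchy (V : normedModType R) (z : nat -> V) :
  (forall k, `|z k.+1 - z k| < halfpow k) -> cauchy_seq z.
Proof.
move=> hz.
have tail n j : `|z (n + j)%N - z n| <= 2 * halfpow n - 2 * halfpow (n + j)%N.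
  elim: j => [|j ih]; first by rewrite addn0 !subrr normr0.
  rewrite addnS -(subrKA (z (n + j)%N)); apply: le_trans (ler_normD _ _) _.
  by have := lerD (ltW (hz (n + j)%N)) ih; rewrite halfpowS; lra.
have near n m : (n <= m)%N -> `|z m - z n| <= 2 * halfpow n.
  move=> /subnKC <-; apply: le_trans (tail _ _) _.
  by rewrite lerBlDr lerDl mulr_ge0 // ltW // halfpow_gt0.
move=> e e0; have [n0 hn0] : exists n0, halfpow n0 < e / 4.
  by apply: halfpow_lt; rewrite divr_gt0.
exists n0 => m n hm hn.
rewrite -(subrKA (z n0)); apply: le_lt_trans (ler_normD _ _) _.
by rewrite [`|z n0 - _|]distrC; have := lerD (near _ _ hm) (near _ _ hn); lra.
Qed.

End Sequences.

Section QuotientComplete.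
Variables (R : realType) (V : vlattice R) (I : set V).
Hypothesis hI : is_closed_ideal I.

Lemma lift_fast (w : nat -> V) : (forall k, dist_mod I (w k.+1 - w k) < halfpow R k) ->
  exists z : nat -> V,
    (forall k, eqmod I (z k) (w k)) /\ (forall k, `|z k.+1 - z k| < halfpow R k).
Proof.
move=> hw.
have /choice[d hd] : forall p : V * nat, exists d, I d /\
    (dist_mod I p.1 < halfpow R p.2 -> `|p.1 - d| < halfpow R p.2).
  move=> [y k] /=; have [hy|_] := boolP (dist_mod I y < halfpow R k); last first.
    by exists 0; split=> //; apply: ideal0 (proj1 hI).
  have [|c hc hyc] := dist_mod_approx hI y (_ : 0 < halfpow R k - dist_mod I y).
    by rewrite subr_gt0.
  by exists c; split=> // _; rewrite subrKC in hyc.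
pose z := fix z k := if k is k'.+1 then w k - d (w k - z k', k') else w 0.
have hzw k : eqmod I (z k) (w k).
  case: k => [|k] /=; first exact: eqmod_refl.
  by rewrite /eqmod addrAC subrr add0r; apply/(idealN (proj1 hI)); case: (hd (w k.+1 - z k, k)).
exists z; split => // k; rewrite /= addrAC.
case: (hd (w k.+1 - z k, k)) => _ /=; apply.
rewrite (dist_mod_eqmod hI (y' := w k.+1 - w k)) //.
exact: eqmodD (eqmod_refl _ _) (eqmodN hI (hzw k)).
Qed.

Lemma quotient_banach : is_banach V -> is_banach (quotient_vlattice hI).
Proof.
move=> hV u /cauchy_fast_subseq[M [hM hMu]].
pose w k := val (u (M k)).
have hw k : dist_mod I (w k.+1 - w k) < halfpow R k by rewrite -quot_normB; apply/hMu/hM.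
have [z [hzw hz]] := lift_fast hw.
have [l hl] := hV z (fast_cauchy hz).
exists (qproj hI l) => e e0; have e2 : 0 < e / 2 by rewrite divr_gt0.
have [k1 hk1] := halfpow_lt e2; have [K0 hK0] := hl _ e2.
pose k := maxn k1 K0; exists (M k) => n hn.
rewrite -(subrKA (u (M k))); apply: le_lt_trans (ler_normD _ _) _.
rewrite [e]splitr; apply: ltrD.
  apply: lt_le_trans (hMu k n hn) _.
  exact: le_trans (halfpow_le _ (leq_maxl k1 K0)) (ltW hk1).
rewrite quot_normB -(dist_mod_eqmod hI (y := z k - l)); last first.
  exact: eqmodD (hzw k) (eqmodN hI (eqmod_sym hI (val_qproj hI l))).
exact: le_lt_trans (dist_mod_le_norm hI _) (hK0 _ (leq_maxr _ _)).
Qed.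

End QuotientComplete.

Section LinearMaps.
Variables (R : realType) (X Y : vlattice R) (T : X -> Y).
Hypothesis hT : is_lin T.

Lemma lin0 : T 0 = 0.
Proof.
have := hT 1 0 0; rewrite !scale1r addr0 => h.
by apply: (@addrI _ (T 0)); rewrite addr0 -h.
Qed.

Lemma linD u v : T (u + v) = T u + T v.
Proof. by have := hT 1 u v; rewrite !scale1r. Qed.

Lemma linZ a u : T (a *: u) = a *: T u.
Proof. by have := hT a u 0; rewrite !addr0 lin0 addr0. Qed.

Lemma linB u v : T (u - v) = T u - T v.
Proof. by rewrite linD -scaleN1r linZ scaleN1r. Qed.

End LinearMaps.

Lemma le0_of_small (R : realType) (r K : R) : 0 <= K ->
  (forall d, 0 < d -> r <= K * d) -> r <= 0.
Proof.
move=> K0 h; apply/ler_addgt0Pr => e e0; rewrite add0r.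
have hK1 : 0 < K + 1 by rewrite ltr_wpDl.
apply: le_trans (h (e / (K + 1)) _) _; first by rewrite divr_gt0.
by rewrite mulrA ler_pdivrMr //; nra.
Qed.

Lemma eq_of_dist_small (R : realType) (V : normedModType R) (a b : V) (K : R) : 0 <= K ->
  (forall d, 0 < d -> `|a - b| <= K * d) -> a = b.
Proof. by move=> K0 h; apply/eqP; rewrite -subr_eq0 -normr_le0; apply: le0_of_small K0 h. Qed.

Lemma bounded_lin_eq_on_dense (R : realType) (X Xh Y : vlattice R) (j : X -> Xh)
    (S1 S2 : Xh -> Y) :
  (forall (y : Xh) (e : R), 0 < e -> exists x : X, `|y - j x| < e) ->
  is_lin S1 -> is_lin S2 -> is_bounded S1 -> is_bounded S2 ->
  (forall x, S1 (j x) = S2 (j x)) -> S1 =1 S2.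
Proof.
move=> hden hl1 hl2 [C1 hC1] [C2 hC2] heq y.
apply: (@eq_of_dist_small _ _ _ _ (`|C1| + `|C2|)); first by rewrite addr_ge0.
move=> d d0; have [x hx] := hden y d d0.
have -> : S1 y - S2 y = S1 (y - j x) + S2 (j x - y) by rewrite (linB hl1) (linB hl2) heq subrKA.
apply: le_trans (ler_normD _ _) _; rewrite mulrDl.
have bound C (S : Xh -> Y) (z : Xh) : (forall w, `|S w| <= C * `|w|) -> `|z| <= d ->
    `|S z| <= `|C| * d.
  move=> hS hz; apply: le_trans (hS z) _; apply: le_trans (ler_wpM2r (normr_ge0 _) (ler_norm C)) _.
  exact: ler_wpM2l.
by apply: lerD; [apply: bound hC1 (ltW hx) | apply: bound hC2 _; rewrite distrC; apply: ltW].
Qed.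

Section QuotientMap.
Variables (R : realType) (V : vlattice R) (I : set V).
Hypothesis hI : is_closed_ideal I.
Local Notation Q := (quotient_vlattice hI).
Local Notation q := (qproj hI : V -> Q).

Lemma qproj_lin : is_lin q.
Proof. by move=> a x y; rewrite qprojD qprojZ. Qed.

Lemma qproj_lattice_hom : is_lattice_hom q.
Proof.
move=> x y; apply: (qproj_eq hI); apply: (eqmod_sym hI).
exact: eqmod_join (val_qproj hI x) (val_qproj hI y).
Qed.

Lemma qproj_norm_le y : `|q y| <= `|y|.
Proof. by change (qnorm (qproj hI y) <= `|y|); rewrite qnorm_qproj dist_mod_le_norm. Qed.

Lemma qproj_eq0 y : I y -> q y = 0.
Proof. by move=> hy; apply: qproj_eq; rewrite /eqmod subr0. Qed.

End QuotientMap.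

Definition injective_extension_property (R : realType) (X Xh : vlattice R)
    (j : X -> Xh) :=
  forall Y : vlattice R, is_banach Y ->
    forall T : X -> Y, is_lin T -> is_lattice_hom T -> is_bounded T -> injective T ->
      exists Th : Xh -> Y,
        [/\ is_lin Th, is_bounded Th, injective Th & forall x : X, Th (j x) = T x].

Definition closed_ideals_meet_range (R : realType) (X Xh : vlattice R) (j : X -> Xh) :=
  forall x : Xh, vl_le Xh 0 x -> x <> 0 -> exists z : X, z <> 0 /\ gen_closed_ideal x (j z).

Lemma extension_property_ideals_meet (R : realType) (X Xh : vlattice R) (j : X -> Xh) :
  is_completion j -> injective_extension_property j -> closed_ideals_meet_range j.
Proof.
case=> hban hlin hlat hiso hden H x _ hx0; apply: contrapT => hmiss.
have hG := gen_closed_ideal_closed_ideal x.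
have [||||Th [hl hb hinj hext]] := H _ (quotient_banach (hI := hG) hban) (qproj hG \o j).
- by move=> a y y'; rewrite /= hlin qproj_lin.
- by move=> y y'; rewrite /= hlat qproj_lattice_hom.
- by exists 1 => z; rewrite mul1r -hiso qproj_norm_le.
- move=> z1 z2 /qproj_eqmod hz; apply/eqP; rewrite -subr_eq0; apply/eqP.
  by apply: contrapT => hz0; apply: hmiss; exists (z1 - z2); rewrite (linB hlin).
have hThq : Th =1 qproj hG.
  apply: (bounded_lin_eq_on_dense hden hl (qproj_lin hG) hb) => //.
  by exists 1 => y; rewrite mul1r qproj_norm_le.
apply/hx0/hinj; rewrite !hThq (lin0 (qproj_lin hG)).
by apply: qproj_eq0 => J _.
Qed.

Section Extension.
Variables (R : realType) (X Xh Y : vlattice R) (j : X -> Xh) (T : X -> Y) (C : R).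
Hypotheses (hj_lin : is_lin j) (hj_iso : forall x, `|j x| = `|x|)
  (hj_dense : forall (y : Xh) (e : R), 0 < e -> exists x : X, `|y - j x| < e).
Hypotheses (hT_lin : is_lin T) (hC0 : 0 < C) (hC : forall x, `|T x| <= C * `|x|).

Lemma lin_lipschitz x1 x2 : `|T x1 - T x2| <= C * `|j x1 - j x2|.
Proof. by rewrite -(linB hT_lin) -(linB hj_lin) hj_iso. Qed.

(* [Th y] is the limit of [T] along a sequence of [j X] converging to [y]. *)
Lemma exists_lipschitz_extension : is_banach Y ->
  exists Th : Xh -> Y, forall y x, `|T x - Th y| <= C * `|j x - y|.
Proof.
move=> hY.
have /choice[s hs] : forall p : Xh * nat, exists x, `|p.1 - j x| < halfpow R p.2.
  by move=> p; apply: hj_dense; apply: halfpow_gt0.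
have approx y x n : `|T x - T (s (y, n))| <= C * (`|j x - y| + halfpow R n).
  apply: le_trans (lin_lipschitz _ _) _; rewrite ler_pM2l // -(subrKA y).
  exact: le_trans (ler_normD _ _) (lerD (lexx _) (ltW (hs (y, n)))).
have small e : 0 < e -> exists n0, C * halfpow R n0 < e.
  move=> e0; have [n0 hn0] : exists n0, halfpow R n0 < e / C.
    by apply: halfpow_lt; rewrite divr_gt0.
  by exists n0; rewrite mulrC -ltr_pdivlMr.
have /choice[Th hTh] : forall y, exists l, tends_to (fun n => T (s (y, n))) l.
  move=> y; apply: hY => e e0; have [n0 hn0] := small _ (divr_gt0 e0 (ltr0n _ 2)).
  exists n0 => m n hm hn; apply: le_lt_trans (approx _ _ _) _.
  rewrite distrC mulrDr [e]splitr; apply: ltrD.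
    apply: le_lt_trans hn0; rewrite ler_pM2l //.
    exact: le_trans (ltW (hs (y, m))) (halfpow_le _ hm).
  by apply: le_lt_trans hn0; rewrite ler_pM2l // halfpow_le.
exists Th => y x; apply/ler_addgt0Pr => e e0.
have e2 : 0 < e / 2 by rewrite divr_gt0.
have [N hN] := hTh y _ e2; have [n1 hn1] := small _ e2.
pose n := maxn N n1.
rewrite -(subrKA (T (s (y, n)))); apply: le_trans (ler_normD _ _) _.
have h1 := hN n (leq_maxl _ _).
have h2 : C * halfpow R n <= e / 2.
  by apply: le_trans (ltW hn1); rewrite ler_pM2l ?halfpow_le ?leq_maxr.
by have := approx y x n; lra.
Qed.

Variable Th : Xh -> Y.
Hypothesis hTh : forall y x, `|T x - Th y| <= C * `|j x - y|.

Lemma lipschitz_ext_near y x d : `|y - j x| < d -> `|T x - Th y| <= C * d.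
Proof. by move=> h; apply: le_trans (hTh y x) _; rewrite ler_pM2l // distrC ltW. Qed.

Lemma lipschitz_ext_agrees x : Th (j x) = T x.
Proof.
apply/eqP; rewrite eq_sym -subr_eq0 -normr_le0.
by have := hTh (j x) x; rewrite subrr normr0 mulr0.
Qed.

Lemma lipschitz_ext_lin : is_lin Th.
Proof.
move=> a u v; apply: (@eq_of_dist_small _ _ _ _ (2 * C * (`|a| + 1))).
  by rewrite !mulr_ge0 ?ltW // addr_ge0.
move=> d d0; have [x1 hx1] := hj_dense u d0; have [x2 hx2] := hj_dense v d0.
rewrite -(subrKA (a *: T x1 + T x2)); apply: le_trans (ler_normD _ _) _.
have hA : `|Th (a *: u + v) - (a *: T x1 + T x2)| <= C * (`|a| * d + d).
  rewrite -hT_lin distrC; apply: lipschitz_ext_near.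
  rewrite hj_lin opprD addrACA -scalerBr; apply: le_lt_trans (ler_normD _ _) _.
  rewrite normrZ; apply: ler_ltD hx2; exact: ler_wpM2l (ltW hx1).
have hB : `|a *: T x1 + T x2 - (a *: Th u + Th v)| <= `|a| * (C * d) + C * d.
  rewrite opprD addrACA -scalerBr; apply: le_trans (ler_normD _ _) _.
  rewrite normrZ; apply: lerD; last exact: lipschitz_ext_near.
  exact/ler_wpM2l/lipschitz_ext_near.
by have := normr_ge0 a; nra.
Qed.

Lemma lipschitz_ext_bound y : `|Th y| <= C * `|y|.
Proof.
rewrite -subr_le0; apply: (@le0_of_small _ _ (2 * C)); first by rewrite mulr_ge0 ?ltW.
move=> d d0; have [x hx] := hj_dense y d0.
have h1 := lipschitz_ext_near hx; have h2 := hC x.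
have h3 : `|x| <= `|y| + d.
  rewrite -hj_iso -(subrK y (j x)) addrC; apply: le_trans (ler_normD _ _) _.
  by rewrite lerD2l distrC ltW.
have h4 : `|Th y| <= `|T x - Th y| + `|T x|.
  by have := ler_normD (Th y - T x) (T x); rewrite subrK distrC.
by have := ler_wpM2l (ltW hC0) h3; lra.
Qed.

Hypotheses (hj_hom : is_lattice_hom j) (hT_hom : is_lattice_hom T).

Lemma lipschitz_ext_lattice_hom : is_lattice_hom Th.
Proof.
move=> u v; apply: (@eq_of_dist_small _ _ _ _ (4 * C)); first by rewrite mulr_ge0 ?ltW.
move=> d d0; have [x1 hx1] := hj_dense u d0; have [x2 hx2] := hj_dense v d0.
rewrite -(subrKA (T (vl_join X x1 x2))); apply: le_trans (ler_normD _ _) _.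
have hA : `|Th (vl_join Xh u v) - T (vl_join X x1 x2)| <= C * (d + d).
  rewrite distrC; apply: le_trans (hTh _ _) _; rewrite ler_pM2l // hj_hom.
  apply: le_trans (vl_norm_join_sub _ _ _ _) _.
  by apply: lerD; rewrite distrC ltW.
have hB : `|T (vl_join X x1 x2) - vl_join Y (Th u) (Th v)| <= C * d + C * d.
  rewrite hT_hom; apply: le_trans (vl_norm_join_sub _ _ _ _) _.
  by apply: lerD; apply: lipschitz_ext_near.
by nra.
Qed.

Lemma lipschitz_ext_kernel : is_closed_ideal [set y | Th y = 0].
Proof.
have hlin := lipschitz_ext_lin; have hhom := lipschitz_ext_lattice_hom.
have habs w : Th (vl_abs w) = vl_abs (Th w).
  by rewrite /vl_abs hhom -scaleN1r (linZ hlin) scaleN1r.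
split; first split.
- exact: lin0 hlin.
- by move=> a w w' /= h1 h2; rewrite hlin h1 h2 scaler0 addr0.
- move=> w w' /= h1 h2; apply: vl_abs_eq0; apply: vl_le_anti; last exact: vl_abs_ge0.
  by rewrite -habs -(vl_abs0 Y) -h1 -habs -(vl_join_r h2) hhom; apply: vl_join_ubl.
- move=> w hw /=; apply: (@eq_of_dist_small _ _ _ _ C); first exact: ltW.
  move=> d d0; have [w' [hw' hb]] := hw _ (nbhsx_ballx w d d0).
  rewrite -ball_normE /ball_ /= in hb.
  rewrite -hw' -(linB hlin); apply: le_trans (lipschitz_ext_bound _) _.
  by rewrite ler_pM2l // ltW.
Qed.

End Extension.

Lemma ideals_meet_extension_property (R : realType) (X Xh : vlattice R) (j : X -> Xh) :
  is_completion j -> closed_ideals_meet_range j -> injective_extension_property j.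
Proof.
case=> _ hlin hlat hiso hden hmeet Y hY T hTl hTh [C hC] hTi.
have hC1 : 0 < `|C| + 1 by rewrite ltr_wpDl.
have hC1T x : `|T x| <= (`|C| + 1) * `|x|.
  by apply: le_trans (hC x) (ler_wpM2r (normr_ge0 _) _); rewrite (le_trans (ler_norm C)) ?lerDl.
have [Th hL] := exists_lipschitz_extension hlin hiso hden hTl hC1 hC1T hY.
have hThl := lipschitz_ext_lin hlin hden hTl hC1 hL.
have hK := lipschitz_ext_kernel hlin hiso hden hTl hC1 hC1T hL hlat hTh.
exists Th; split => //.
- by exists (`|C| + 1); exact: (lipschitz_ext_bound hiso hden hC1 hC1T hL).
- move=> u1 u2 h12; apply/eqP; rewrite -subr_eq0; apply/eqP.
  apply: contrapT => hy.
  have hKy : Th (u1 - u2) = 0 by rewrite (linB hThl) h12 subrr.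
  have [|z [hz0 hz]] := hmeet (vl_abs (u1 - u2)) (vl_abs_ge0 _); first by move/vl_abs_eq0.
  apply/hz0/hTi; rewrite (lin0 hTl) -(lipschitz_ext_agrees hL).
  by apply: (hz _ hK); apply: (ideal_abs (proj1 hK)).
- exact: lipschitz_ext_agrees hL.
Qed.

Theorem mainTheorem2 (R : realType) (X Xh : vlattice R) (j : X -> Xh)
  (hj : is_completion j) :
  (forall Y : vlattice R, is_banach Y ->
     forall T : X -> Y, is_lin T -> is_lattice_hom T -> is_bounded T ->
       injective T ->
       exists Th : Xh -> Y,
         [/\ is_lin Th, is_bounded Th, injective Th &
             forall x : X, Th (j x) = T x])
  <->
  (forall x : Xh, vl_le Xh 0 x -> x <> 0 ->
     exists z : X, z <> 0 /\ gen_closed_ideal x (j z)).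
Proof.
split; first exact: extension_property_ideals_meet.
exact: ideals_meet_extension_property.
Qed.
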